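(* Let $f:\{0,1\}^3\to\{0,1\}$ be $f(x_1,x_2,x_3)=x_1\wedge(x_2\vee x_3)$. Then $Q_E(f)=2$, while every parity decision tree computing $f$ has depth at least $3$.
   Context: Quantum query model: a $t$-query quantum query algorithm on inputs $x\in\{0,1\}^m$ acts on a Hilbert space $\mathcal H_{\rm in}\otimes\mathcal H_{\rm work}\otimes\mathcal H_{\rm out}$, where $\mathcal H_{\rm in}$ has orthonormal basis $|0\rangle,\dots,|m\rangle$, $\mathcal H_{\rm work}$ is a finite-dimensional workspace of arbitrary size, and $\mathcal H_{\rm out}$ is one qubit. It is specified by input-independent unitaries $U_0,\dots,U_t$, and on input $x$ produces the state $U_tO_xU_{t-1}O_x\cdots O_xU_0|0\rangle$ ($t$ applications of $O_x$), where the oracle $O_x$ acts on $\mathcal H_{\rm in}$ by $|i\rangle\mapsto(-1)^{x_i}|i\rangle$ with the convention $x_0=0$ (and as the identity on the other registers). The output is obtained by measuring $\mathcal H_{\rm out}$ in the computational basis. The algorithm computes $h$ exactly if for every $x$ the output equals $h(x)$ with probability $1$. $Q_E(h)$ is the minimum $t$ such that some $t$-query quantum query algorithm computes $h$ exactly. A parity decision tree is a rooted binary tree in which every internal vertex has exactly two children and each internal vertex $v$ is labelled by a subset $S_v$ of input positions, and each leaf is labelled $0$ or $1$. On input $x$, evaluation starts at the root; at internal vertex $v$ the parity $\bigoplus_{i\in S_v}x_i$ is computed, and the left subtree is evaluated if it is $0$ and the right subtree if it is $1$; the output is the label of the leaf reached. Its depth is the maximum length of a root-to-leaf path. *)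

From HB Require Import structures.
From mathcomp Require Import all_boot all_order all_algebra.
Set Implicit Arguments. Unset Strict Implicit. Unset Printing Implicit Defensive.
Import Order.TTheory GRing.Theory Num.Theory.
Local Open Scope ring_scope.

(** Amplitudes live in an arbitrary numClosedFieldType C (e.g. the complex
    numbers; conjugation is Num.conj).
    The Hilbert space H_in (x) H_work (x) H_out has orthonormal basis indexed by
    I_(m+1) (input register |0>..|m>) x I_(w+1) (workspace of dimension w+1,
    arbitrary) x bool (output qubit). *)
Notation qidx m w := ('I_m.+1 * 'I_w.+1 * bool)%type.

(* Operators as matrices given by their entries U i j = <i|U|j>. *)
Definition is_unitary (C : numClosedFieldType) (T : finType) (U : T -> T -> C)
  : Prop :=
  forall i j : T, \sum_(k : T) (U k i)^* * U k j = (i == j)%:R.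

Definition mapply (C : numClosedFieldType) (T : finType) (U : T -> T -> C)
  (v : T -> C) : T -> C := fun i => \sum_(j : T) U i j * v j.

(* x_i for i in {0..m}, with the convention x_0 = 0; the input register
   index i >= 1 corresponds to input bit x (i-1). *)
Definition xbit (m : nat) (x : 'I_m -> bool) (i : 'I_m.+1) : bool :=
  match unlift ord0 i with None => false | Some j => x j end.

Definition oracle (C : numClosedFieldType) (m w : nat) (x : 'I_m -> bool)
  (v : qidx m w -> C) : qidx m w -> C :=
  fun s => (-1) ^+ xbit x s.1.1 * v s.

Definition init (C : numClosedFieldType) (m w : nat) : qidx m w -> C :=
  fun s => (s == (ord0, ord0, false))%:R.

Fixpoint qrun (C : numClosedFieldType) (m w : nat) (x : 'I_m -> bool)
  (U : nat -> qidx m w -> qidx m w -> C) (k : nat) : qidx m w -> C :=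
  match k with
  | 0 => mapply (U 0%N) (@init C m w)
  | k'.+1 => mapply (U k) (oracle x (qrun x U k'))
  end.

Definition prob_out (C : numClosedFieldType) (m w : nat) (v : qidx m w -> C)
  (b : bool) : C :=
  \sum_(s : qidx m w | s.2 == b) `|v s| ^+ 2.

Definition computes_exactly (C : numClosedFieldType) (m w t : nat)
  (U : nat -> qidx m w -> qidx m w -> C) (h : ('I_m -> bool) -> bool) : Prop :=
  (forall k, (k <= t)%N -> is_unitary (U k)) /\
  (forall x : 'I_m -> bool, prob_out (qrun x U t) (h x) = 1).

Definition exact_in_queries (C : numClosedFieldType) (m : nat)
  (h : ('I_m -> bool) -> bool) (t : nat) : Prop :=
  exists (w : nat) (U : nat -> qidx m w -> qidx m w -> C),
    @computes_exactly C m w t U h.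

Inductive pdt (m : nat) : Type :=
| PLeaf of bool
| PNode of {set 'I_m} & pdt m & pdt m.

Fixpoint pdt_eval (m : nat) (T : pdt m) (x : 'I_m -> bool) : bool :=
  match T with
  | PLeaf b => b
  | PNode P l r =>
      if odd (\sum_(i in P) nat_of_bool (x i)) then pdt_eval r x else pdt_eval l x
  end.

Fixpoint pdt_depth (m : nat) (T : pdt m) : nat :=
  match T with
  | PLeaf _ => 0
  | PNode _ l r => (maxn (pdt_depth l) (pdt_depth r)).+1
  end.

Definition f3 (x : 'I_3 -> bool) : bool :=
  x (inord 0) && (x (inord 1) || x (inord 2)).

From Pilot Require Import Defs.
From HB Require Import structures.
From Stdlib Require Import ZArith.
From mathcomp Require Import all_boot all_order all_algebra ring ssrZ.
Set Implicit Arguments. Unset Strict Implicit. Unset Printing Implicit Defensive.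
Import Order.TTheory GRing.Theory Num.Theory.

(* We exhibit a 2-query algorithm on a 16-dimensional space (input
   register |0>..|3>, one workspace qubit, output qubit) whose unitaries are real
   orthogonal matrices M_k / d_k with M_k integral and d_k = 2, 8, 32.  Orthogonality
   and exactness are decided by computing with binary integers (Z), and transferred
   to an arbitrary numClosedFieldType along the ring morphism Z -> C.

   After at most one query the acceptance
   probability is a combination of products of at most two oracle signs (-1)^x_i,
   so its top Fourier coefficient (the sum over x of (-1)^(x1+x2+x3) p(x)) vanishes;
   for an exact algorithm p = f, whose top coefficient is 1.

   A tree of depth at most 2 on three bits computes
   "if l(x) then a(x) else b(x)" with l linear and a, b affine over GF(2): a function
   of GF(2)-degree at most 2, whose XOR over the cube {0,1}^3 is therefore 0.  But f
   takes the value 1 an odd number of times. *)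

Definition bits (x : 'I_3 -> bool) : bool * bool * bool := (x (inord 0), x (inord 1), x (inord 2)).

Definition cube (y : bool * bool * bool) : 'I_3 -> bool :=
  fun i => nth false [:: y.1.1; y.1.2; y.2] i.

Definition cube_points : seq (bool * bool * bool) :=
  [:: (false, false, false); (false, false, true); (false, true, false); (false, true, true);
      (true, false, false); (true, false, true); (true, true, false); (true, true, true)].

Definition input_bit (y : bool * bool * bool) (i : nat) : bool :=
  nth false [:: false; y.1.1; y.1.2; y.2] i.

Definition f3b (y : bool * bool * bool) : bool := y.1.1 && (y.1.2 || y.2).

Lemma bits_cube (y : bool * bool * bool) : bits (cube y) = y.
Proof. by case: y => [[b0 b1] b2]; rewrite /bits /cube !inordK. Qed.

Lemma f3_cube (y : bool * bool * bool) : f3 (cube y) = f3b y.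
Proof. by rewrite -[in RHS](bits_cube y). Qed.

Lemma xbit_bits (x : 'I_3 -> bool) (r : 'I_4) : xbit x r = input_bit (bits x) r.
Proof.
rewrite /xbit; case: (unliftP ord0 r) => [j -> | ->] //; rewrite lift0 /=.
by case: j => [[|[|[|j]]] hj] //=; congr x; apply: val_inj; rewrite /= inordK.
Qed.

(* Basis vector |i>|w>|b> has number 4i + 2w + b; row n of M_k
   lists the entries <n|d_k U_k|j>.  The first unitary M0 / 2 sends |0>|0>|0> to
   (|0,0,0> + |0,0,1> + |2,0,0> + |3,0,0>) / 2. *)
Local Open Scope Z_scope.

Definition M0 : seq (seq Z) := [::
  [::   1;   1;   0;   0;   0;   0;   0;   0;   1;   0;   0;   0;   1;   0;   0;   0];
  [::   1;   1;   0;   0;   0;   0;   0;   0;  -1;   0;   0;   0;  -1;   0;   0;   0];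
  [::   0;   0;   2;   0;   0;   0;   0;   0;   0;   0;   0;   0;   0;   0;   0;   0];
  [::   0;   0;   0;   2;   0;   0;   0;   0;   0;   0;   0;   0;   0;   0;   0;   0];
  [::   0;   0;   0;   0;   2;   0;   0;   0;   0;   0;   0;   0;   0;   0;   0;   0];
  [::   0;   0;   0;   0;   0;   2;   0;   0;   0;   0;   0;   0;   0;   0;   0;   0];
  [::   0;   0;   0;   0;   0;   0;   2;   0;   0;   0;   0;   0;   0;   0;   0;   0];
  [::   0;   0;   0;   0;   0;   0;   0;   2;   0;   0;   0;   0;   0;   0;   0;   0];
  [::   1;  -1;   0;   0;   0;   0;   0;   0;   1;   0;   0;   0;  -1;   0;   0;   0];
  [::   0;   0;   0;   0;   0;   0;   0;   0;   0;   2;   0;   0;   0;   0;   0;   0];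
  [::   0;   0;   0;   0;   0;   0;   0;   0;   0;   0;   2;   0;   0;   0;   0;   0];
  [::   0;   0;   0;   0;   0;   0;   0;   0;   0;   0;   0;   2;   0;   0;   0;   0];
  [::   1;  -1;   0;   0;   0;   0;   0;   0;  -1;   0;   0;   0;   1;   0;   0;   0];
  [::   0;   0;   0;   0;   0;   0;   0;   0;   0;   0;   0;   0;   0;   2;   0;   0];
  [::   0;   0;   0;   0;   0;   0;   0;   0;   0;   0;   0;   0;   0;   0;   2;   0];
  [::   0;   0;   0;   0;   0;   0;   0;   0;   0;   0;   0;   0;   0;   0;   0;   2]].
Definition M1 : seq (seq Z) := [::
  [::   0;   0;   0;   0;   0;   0;   0;   4;   0;   4;   4;   0;   0;   4;   0;   0];
  [::   0;   0;   0;   0;   0;   0;   0;  -4;   0;   4;  -4;   0;   0;   4;   0;   0];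
  [::   2;   2;   5;  -1;  -2;   1;   3;   0;   0;   0;   0;   0;  -4;   0;   0;   0];
  [::   2;   2;  -1;   5;   2;   3;   1;   0;  -4;   0;   0;   0;   0;   0;   0;   0];
  [::   0;   0;  -2;   2;   4;  -2;   2;   0;   4;   0;   0;   0;  -4;   0;   0;   0];
  [::  -2;  -2;   1;   3;  -2;   5;  -1;   0;   4;   0;   0;   0;   0;   0;   0;   0];
  [::  -2;  -2;   3;   1;   2;  -1;   5;   0;   0;   0;   0;   0;   4;   0;   0;   0];
  [::   4;  -4;   0;   0;   0;   0;   0;   4;   0;   0;  -4;   0;   0;   0;   0;   0];
  [::   2;   2;   0;  -4;   4;   4;   0;   0;   2;   0;   0;   0;   2;   0;   0;   0];
  [::   2;   2;   2;   2;   0;  -2;  -2;   0;   2;   4;   0;   0;   2;  -4;   0;   0];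
  [::   4;  -4;   0;   0;   0;   0;   0;  -4;   0;   0;   4;   0;   0;   0;   0;   0];
  [::   0;   0;   0;   0;   0;   0;   0;   0;   0;   0;   0;   8;   0;   0;   0;   0];
  [::   2;   2;  -4;   0;  -4;   0;   4;   0;   2;   0;   0;   0;   2;   0;   0;   0];
  [::   2;   2;   2;   2;   0;  -2;  -2;   0;   2;  -4;   0;   0;   2;   4;   0;   0];
  [::   0;   0;   0;   0;   0;   0;   0;   0;   0;   0;   0;   0;   0;   0;   8;   0];
  [::   0;   0;   0;   0;   0;   0;   0;   0;   0;   0;   0;   0;   0;   0;   0;   8]].
Definition M2 : seq (seq Z) := [::
  [::   0;   0;   0;   0;   0;   0;   0;   0;  16;  16;   0;   0;  16;  16;   0;   0];
  [::   0;   0;   0;  16;  16;  16;   0;   0;  -8;  -8;   0;   0;   8;   8;   0;   0];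
  [::   0;   0;   0;  16; -16; -16;   0;   0;  -8;  -8;   0;   0;   8;   8;   0;   0];
  [::   4;  18;   2;  14;   0;   0;  16;   0;  11;   3;   0;   0;  -7;  -7;   0;   0];
  [::  -4;  -2;  14;   2;  16; -16;   0; -16;  -3;   5;   0;   0;  -1;  -1;   0;   0];
  [::  -4;  -2;  14;   2; -16;  16;   0; -16;  -3;   5;   0;   0;  -1;  -1;   0;   0];
  [::  -8;  12;  12;   4;   0;   0; -16;  16;  -6;  10;   0;   0;  -2;  -2;   0;   0];
  [::   0; -16;  16;   0;   0;   0;  16;  16;   0;   0;   0;   0;   0;   0;   0;   0];
  [::  12; -10;   6;  10;   0;   0; -16;   0;  17;  -7;   0;   0;  -5;  -5;   0;   0];
  [::  16;  -8;  -8;   8;   0;   0;   0;   0; -12;  20;   0;   0;  -4;  -4;   0;   0];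
  [::   0;   0;   0;   0;   0;   0;   0;   0;   0;   0;  32;   0;   0;   0;   0;   0];
  [::   0;   0;   0;   0;   0;   0;   0;   0;   0;   0;   0;  32;   0;   0;   0;   0];
  [::  16;   8;   8;  -8;   0;   0;   0;   0;  -4;  -4;   0;   0;  20; -12;   0;   0];
  [::  16;   8;   8;  -8;   0;   0;   0;   0;  -4;  -4;   0;   0; -12;  20;   0;   0];
  [::   0;   0;   0;   0;   0;   0;   0;   0;   0;   0;   0;   0;   0;   0;  32;   0];
  [::   0;   0;   0;   0;   0;   0;   0;   0;   0;   0;   0;   0;   0;   0;   0;  32]].

(* Integer simulation.  Vectors are sequences of 16 integers indexed by basis
   numbers; sums over the basis are computed by a fold, so that vm_compute can
   decide the facts below. *)
Definition entry (M : seq (seq Z)) (i j : nat) : Z := nth 0 (nth [::] M i) j.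

Definition zsum16 (F : nat -> Z) : Z := foldr (fun n acc => F n + acc) 0 (iota 0 16).

Definition zapply (M : seq (seq Z)) (v : seq Z) : seq Z :=
  mkseq (fun i => zsum16 (fun j => entry M i j * nth 0 v j)) 16.

Definition zsign (b : bool) : Z := if b then -1 else 1.

Definition zoracle (y : bool * bool * bool) (v : seq Z) : seq Z :=
  mkseq (fun n => zsign (input_bit y (n %/ 4)) * nth 0 v n) 16.

Definition zinit : seq Z := mkseq (fun n => if n == 0%N then 1 else 0) 16.

(* 512 times the final state U_2 O_x U_1 O_x U_0 |0> on input y. *)
Definition zfinal (y : bool * bool * bool) : seq Z :=
  zapply M2 (zoracle y (zapply M1 (zoracle y (zapply M0 zinit)))).

Definition orthogonal_scaled (M : seq (seq Z)) (d : Z) : bool :=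
  all (fun i => all (fun j =>
    Z.eqb (zsum16 (fun l => entry M l i * entry M l j)) (if i == j then d * d else 0))
    (iota 0 16)) (iota 0 16).

Definition accepts (y : bool * bool * bool) : bool :=
  Z.eqb (zsum16 (fun n => if odd n == f3b y then nth 0 (zfinal y) n * nth 0 (zfinal y) n else 0)) (512 * 512).

Lemma tables_orthogonal :
  [&& orthogonal_scaled M0 2, orthogonal_scaled M1 8 & orthogonal_scaled M2 32].
Proof. by vm_compute. Qed.

Lemma all_accept : all accepts cube_points.
Proof. by vm_compute. Qed.

Local Close Scope Z_scope.
Local Open Scope ring_scope.

Notation Q := (qidx 3 1).

Definition code (s : Q) : nat := 4 * s.1.1 + 2 * s.1.2 + s.2.

Definition decode (n : nat) : Q := (inord (n %/ 4), inord (odd (n %/ 2)), odd n).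

Lemma codeK : cancel code decode.
Proof.
move=> [[[i hi] [w hw]] b]; rewrite /code /decode /=.
by case: i hi => [|[|[|[|i]]]] hi //; case: w hw => [|[|w]] hw //; case: b;
  congr (_, _, _); apply: val_inj; rewrite /= inordK.
Qed.

Lemma code_lt (s : Q) : (code s < 16)%N.
Proof.
move: s => [[[i hi] [w hw]] b]; rewrite /code /=.
by case: i hi => [|[|[|[|i]]]] hi //; case: w hw => [|[|w]] hw //; case: b.
Qed.

Lemma code_div4 (s : Q) : (code s %/ 4 = s.1.1)%N.
Proof.
move: s => [[[i hi] [w hw]] b]; rewrite /code /=.
by case: i hi => [|[|[|[|i]]]] hi //; case: w hw => [|[|w]] hw //; case: b.
Qed.

Lemma odd_code (s : Q) : odd (code s) = s.2.
Proof. by rewrite /code !oddD oddb; case: (odd s.1.1); case: (odd s.1.2). Qed.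

Lemma code_in (s : Q) : code s \in iota 0 16.
Proof. by rewrite mem_iota code_lt. Qed.

Lemma decodeK (n : 'I_16) : code (decode n) = n.
Proof. by case: n => n hn; do 16?[case: n hn => [|n] hn //]; rewrite /code /= !inordK. Qed.

Lemma sum_code (R : nmodType) (F : nat -> R) : \sum_(s : Q) F (code s) = \sum_(n < 16) F n.
Proof.
rewrite (reindex (fun n : 'I_16 => decode n)) /=.
  by apply: eq_bigr => n _; rewrite decodeK.
exists (fun s => Ordinal (code_lt s)) => [n _ | s _]; last exact: codeK.
by apply: val_inj; rewrite /= decodeK.
Qed.

Lemma zsum16E (F : nat -> Z) : zsum16 F = \sum_(n < 16) F n.
Proof.
rewrite -(big_mkord xpredT) /zsum16 /index_iota subn0.
by elim: (iota 0 16) => [|n s IH]; rewrite ?big_nil ?big_cons -?IH.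
Qed.

Section Transfer.
Variable C : numClosedFieldType.

Definition zC (z : Z) : C := (int_of_Z z)%:~R.

Lemma zCM (a b : Z) : zC (a * b) = zC a * zC b.
Proof. by rewrite /zC -intrM -rmorphM. Qed.

Lemma zC_sum16 (F : nat -> Z) : zC (zsum16 F) = \sum_(s : Q) zC (F (code s)).
Proof. by rewrite /zC zsum16E !rmorph_sum (sum_code (fun n => (int_of_Z (F n))%:~R)). Qed.

Lemma zC_real (z : Z) : zC z \is Num.real.
Proof. exact: realz. Qed.

Lemma zC_eq0 (z : Z) : (zC z == 0) = (z == 0).
Proof.
by rewrite /zC intr_eq0 -[0%R in LHS](rmorph0 int_of_Z) (inj_eq (can_inj int_of_ZK)).
Qed.

Definition Uof (M : seq (seq Z)) (d : Z) (i j : Q) : C := zC (entry M (code i) (code j)) / zC d.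

Lemma Uof_unitary (M : seq (seq Z)) (d : Z) :
  d != 0 -> orthogonal_scaled M d -> Defs.is_unitary (Uof M d).
Proof.
move=> d0 /allP orthM i j.
have /allP/(_ _ (code_in j))/Z.eqb_eq := orthM _ (code_in i).
rewrite (inj_eq (can_inj codeK)) => /(congr1 zC); rewrite zC_sum16 => sumE.
have dC0 : zC d * zC d != 0 by rewrite mulf_neq0 // zC_eq0.
have rhsE : (i == j)%:R * (zC d * zC d) = zC (if i == j then d * d else 0).
  by case: (i == j); rewrite ?mul1r ?mul0r -?zCM // /zC rmorph0 mulr0z.
apply: (mulIf dC0); rewrite rhsE -sumE mulr_suml.
apply: eq_bigr => k _.
rewrite conj_Creal ?zCM /Uof ?mulf_div ?divfK //.
by rewrite realM ?realV ?zC_real.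
Qed.

Lemma zC_sign (b : bool) : zC (zsign b) = (-1) ^+ b.
Proof. by case: b. Qed.

(* The amplitude vector with integer numerators v and common denominator c. *)
Definition vecC (v : seq Z) (c : C) (s : Q) : C := zC (nth 0 v (code s)) / c.

Lemma init_vecC : @init C 3 1 =1 vecC zinit 1.
Proof.
move=> s; rewrite /init /vecC divr1 nth_mkseq ?code_lt //.
have -> : (s == (ord0, ord0, false)) = (code s == 0)%N by rewrite -(inj_eq (can_inj codeK)).
by case: (code s == 0)%N.
Qed.

Lemma mapply_vecC (M : seq (seq Z)) (d : Z) (u : Q -> C) (v : seq Z) (c : C) :
  u =1 vecC v c -> mapply (Uof M d) u =1 vecC (zapply M v) (zC d * c).
Proof.
move=> uE s; rewrite /mapply /vecC /zapply nth_mkseq ?code_lt // zC_sum16 mulr_suml.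
by apply: eq_bigr => j _; rewrite uE zCM /Uof /vecC mulf_div.
Qed.

Lemma oracle_vecC (x : 'I_3 -> bool) (u : Q -> C) (v : seq Z) (c : C) :
  u =1 vecC v c -> oracle x u =1 vecC (zoracle (bits x) v) c.
Proof.
move=> uE s; rewrite /oracle uE /vecC /zoracle nth_mkseq ?code_lt //.
by rewrite zCM zC_sign code_div4 -xbit_bits mulrA.
Qed.

Definition alg (k : nat) : Q -> Q -> C :=
  match k with 0 => Uof M0 2 | 1 => Uof M1 8 | _ => Uof M2 32 end.

Lemma alg_final_state (x : 'I_3 -> bool) :
  qrun x alg 2 =1 vecC (zfinal (bits x)) (zC 32 * (zC 8 * (zC 2 * 1))).
Proof. by do 2 (apply: mapply_vecC; apply: oracle_vecC); apply: mapply_vecC; exact: init_vecC. Qed.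

Lemma alg_unitary (k : nat) : (k <= 2)%N -> Defs.is_unitary (alg k).
Proof.
case/and3P: tables_orthogonal => o0 o1 o2.
by case: k => [|[|[|k]]] // _; apply: Uof_unitary.
Qed.

Lemma alg_exact (x : 'I_3 -> bool) : prob_out (qrun x alg 2) (f3 x) = 1.
Proof.
set D := zC 32 * (zC 8 * (zC 2 * 1)).
have DE : D = zC 512 by rewrite /D mulr1 -!zCM.
have D0 : D ^+ 2 != 0 by rewrite expf_neq0 // DE zC_eq0.
have /allP/(_ (bits x)) := all_accept.
have -> : bits x \in cube_points by case: (bits x) => [[[] []] []].
move=> /(_ isT)/Z.eqb_eq/(congr1 zC); rewrite zC_sum16 zCM -DE => sumE.
rewrite /prob_out big_mkcond -[1](divff D0) {1}expr2 -sumE mulr_suml.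
apply: eq_bigr => s _; rewrite alg_final_state odd_code -/D.
have -> : f3 x = f3b (bits x) by [].
case: (s.2 == _); last by rewrite mul0r.
rewrite real_normK /vecC ?expr_div_n ?expr2 ?zCM //.
by rewrite realM ?realV ?zC_real // DE zC_real.
Qed.

End Transfer.

Lemma exact_two_queries (C : numClosedFieldType) : exact_in_queries C f3 2.
Proof. by exists 1%N, (@alg C); split; [exact: alg_unitary | exact: alg_exact]. Qed.

Section QueryLowerBound.
Variable C : numClosedFieldType.

Lemma sum_delta (T : finType) (F : T -> C) (j : T) : \sum_(k : T) F k * (k == j)%:R = F j.
Proof.
rewrite (bigD1 j) //= eqxx mulr1 big1 ?addr0 // => k /negbTE ->; by rewrite mulr0.
Qed.

Lemma norm_mapply (T : finType) (U : T -> T -> C) (v : T -> C) : Defs.is_unitary U ->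
  \sum_i `|mapply U v i| ^+ 2 = \sum_i `|v i| ^+ 2.
Proof.
move=> unitU.
transitivity (\sum_i \sum_j \sum_k (v j * (v k)^*) * ((U i k)^* * U i j)).
  apply: eq_bigr => i _; rewrite normCK /mapply rmorph_sum mulr_suml.
  apply: eq_bigr => j _; rewrite mulr_sumr; apply: eq_bigr => k _.
  rewrite rmorphM; ring.
rewrite exchange_big /=; apply: eq_bigr => j _; rewrite exchange_big /=.
under eq_bigr do rewrite -mulr_sumr unitU.
by rewrite sum_delta normCK.
Qed.

Lemma norm_oracle m w (x : 'I_m -> bool) (v : qidx m w -> C) :
  \sum_i `|oracle x v i| ^+ 2 = \sum_i `|v i| ^+ 2.
Proof. by apply: eq_bigr => i _; rewrite /oracle normrM normr_sign mul1r. Qed.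

Lemma norm_init m w : \sum_i `|@init C m w i| ^+ 2 = 1.
Proof.
rewrite (bigD1 (ord0, ord0, false)) //= /init eqxx normr1 expr1n big1 ?addr0 //.
by move=> i /negbTE ->; rewrite normr0 expr0n.
Qed.

Lemma norm_qrun m w (x : 'I_m -> bool) (U : nat -> qidx m w -> qidx m w -> C) (t : nat) :
  (forall k, (k <= t)%N -> Defs.is_unitary (U k)) -> \sum_s `|qrun x U t s| ^+ 2 = 1.
Proof.
elim: t => [|t IH] unitU /=; rewrite norm_mapply; try exact: unitU.
  exact: norm_init.
by rewrite norm_oracle IH // => k hk; apply: unitU; rewrite ltnW.
Qed.

Lemma prob_out_split m w (v : qidx m w -> C) :
  \sum_s `|v s| ^+ 2 = prob_out v true + prob_out v false.
Proof.
rewrite /prob_out (bigID (fun s : qidx m w => s.2 == true)) /=.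
by congr (_ + _); apply: eq_bigl => s; case: s.2.
Qed.

Lemma exact_accept_prob m w t (U : nat -> qidx m w -> qidx m w -> C) (h : ('I_m -> bool) -> bool)
  (x : 'I_m -> bool) : computes_exactly t U h -> prob_out (qrun x U t) true = (h x)%:R.
Proof.
case=> unitU /(_ x); have := norm_qrun x unitU; rewrite prob_out_split.
case: (h x) => [_ -> // | norm1 pfalse].
by move: norm1; rewrite pfalse => /(congr1 (fun z => z - 1)); rewrite addrK subrr.
Qed.

(* Up to the factor 8, the coefficient of the monomial (-1)^x1 (-1)^x2 (-1)^x3 in the
   Fourier expansion of g; it vanishes on functions depending on at most two bits. *)
Definition top_coef (g : ('I_3 -> bool) -> C) : C :=
  \sum_(b0 : bool) \sum_(b1 : bool) \sum_(b2 : bool)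
    (-1) ^+ b0 * (-1) ^+ b1 * (-1) ^+ b2 * g (cube (b0, b1, b2)).

Lemma top_coef_ext (g h : ('I_3 -> bool) -> C) : g =1 h -> top_coef g = top_coef h.
Proof.
by move=> gh; apply: eq_bigr => b0 _; apply: eq_bigr => b1 _; apply: eq_bigr => b2 _; rewrite gh.
Qed.

Lemma top_coef_sum (I : Type) (r : seq I) (P : pred I) (h : I -> ('I_3 -> bool) -> C) :
  top_coef (fun x => \sum_(i <- r | P i) h i x) = \sum_(i <- r | P i) top_coef (h i).
Proof.
rewrite /top_coef.
under eq_bigr do under eq_bigr do under eq_bigr do rewrite mulr_sumr.
under eq_bigr do under eq_bigr do rewrite exchange_big.
under eq_bigr do rewrite exchange_big.
by rewrite exchange_big.
Qed.

Lemma top_coef_scale (c : C) (h : ('I_3 -> bool) -> C) :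
  top_coef (fun x => c * h x) = c * top_coef h.
Proof.
rewrite /top_coef mulr_sumr; apply: eq_bigr => b0 _; rewrite mulr_sumr.
apply: eq_bigr => b1 _; rewrite mulr_sumr; apply: eq_bigr => b2 _.
by rewrite mulrCA.
Qed.

(* It kills every product of two oracle signs (in particular constants, r = r' = 0). *)
Lemma top_coef_sign_pair (r r' : 'I_4) :
  top_coef (fun x => (-1) ^+ xbit x r * (-1) ^+ xbit x r') = 0.
Proof.
rewrite /top_coef.
under eq_bigr do under eq_bigr do under eq_bigr do rewrite !xbit_bits bits_cube.
rewrite !big_bool.
by case: r => [[|[|[|[|r]]]] hr] //; case: r' => [[|[|[|[|r']]]] hr'] //=; ring.
Qed.

Lemma top_coef_f3 : top_coef (fun x => (f3 x)%:R) = 1.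
Proof.
rewrite /top_coef; under eq_bigr do under eq_bigr do under eq_bigr do rewrite f3_cube.
by rewrite !big_bool /=; ring.
Qed.

Lemma one_query_prob m w (U : qidx m w -> qidx m w -> C) (v : qidx m w -> C)
    (x : 'I_m -> bool) (b : bool) :
  prob_out (mapply U (oracle x v)) b =
  \sum_(s | s.2 == b) \sum_j \sum_k
    (U s j * v j * (U s k * v k)^*) * ((-1) ^+ xbit x j.1.1 * (-1) ^+ xbit x k.1.1).
Proof.
rewrite /prob_out; apply: eq_bigr => s _.
rewrite normCK /mapply /oracle rmorph_sum mulr_suml; apply: eq_bigr => j _.
rewrite mulr_sumr; apply: eq_bigr => k _; rewrite !rmorphM rmorph_sign.
move: ((-1) ^+ xbit x j.1.1) ((-1) ^+ xbit x k.1.1) => a b'; ring.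
Qed.

Lemma top_coef_few_queries w t (U : nat -> qidx 3 w -> qidx 3 w -> C) :
  (t < 2)%N -> top_coef (fun x => prob_out (qrun x U t) true) = 0.
Proof.
case: t => [|[|//]] _ /=.
  set p := prob_out _ true.
  rewrite (@top_coef_ext _ (fun x => p * ((-1) ^+ xbit x ord0 * (-1) ^+ xbit x ord0))).
    by rewrite top_coef_scale top_coef_sign_pair mulr0.
  by move=> x; rewrite /xbit unlift_none /= expr0 !mulr1.
rewrite (top_coef_ext (fun x => one_query_prob _ _ x true)).
rewrite top_coef_sum big1 // => s _; rewrite top_coef_sum big1 // => j _.
by rewrite top_coef_sum big1 // => k _; rewrite top_coef_scale top_coef_sign_pair mulr0.
Qed.

Lemma no_exact_below_two (t : nat) : (t < 2)%N -> ~ exact_in_queries C f3 t.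
Proof.
move=> ht [w [U exactU]]; have := top_coef_few_queries U ht.
rewrite (top_coef_ext (fun x => exact_accept_prob x exactU)) top_coef_f3.
by move/eqP; rewrite oner_eq0.
Qed.
End QueryLowerBound.

Definition dot3 (q y : bool * bool * bool) : bool :=
  (q.1.1 && y.1.1) (+) (q.1.2 && y.1.2) (+) (q.2 && y.2).

Lemma depth_le1_affine m (T : pdt m) : (pdt_depth T <= 1)%N ->
  exists (c : bool) (S : {set 'I_m}),
    forall x, pdt_eval T x = c (+) odd (\sum_(i in S) nat_of_bool (x i)).
Proof.
case: T => [a | P [a1 | ? ? ?] [a2 | ? ? ?]] //=; rewrite ?ltnS ?geq_max ?andbF // => _.
  by exists a, set0 => x; rewrite big_set0 addbF.
exists a1, (if a1 (+) a2 then P else set0) => x.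
by case: a1; case: a2; rewrite /= ?big_set0 ?addbF //; case: odd.
Qed.

Lemma parity3 (S : {set 'I_3}) (x : 'I_3 -> bool) :
  odd (\sum_(i in S) nat_of_bool (x i)) = dot3 (inord 0 \in S, inord 1 \in S, inord 2 \in S) (bits x).
Proof.
have e0 : ord0 = inord 0 :> 'I_3 by apply: val_inj; rewrite /= inordK.
have e1 : lift ord0 ord0 = inord 1 :> 'I_3 by apply: val_inj; rewrite /= inordK.
have e2 : lift ord0 (lift ord0 ord0) = inord 2 :> 'I_3 by apply: val_inj; rewrite /= inordK.
rewrite big_mkcond /= !big_ord_recl big_ord0 addn0 e2 e1 e0 !oddD /dot3 /= addbA.
by case: (inord 0 \in S); case: (inord 1 \in S); case: (inord 2 \in S); rewrite /= ?oddb.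
Qed.

Lemma depth_le2_form (T : pdt 3) : (pdt_depth T <= 2)%N ->
  exists p q r (c d : bool), forall x, pdt_eval T x =
    if dot3 p (bits x) then d (+) dot3 r (bits x) else c (+) dot3 q (bits x).
Proof.
case: T => [a | P l r] /=.
  by move=> _; exists (false, false, false), (false, false, false), (false, false, false), a, a
    => x; rewrite /dot3 /= !addbF.
rewrite ltnS geq_max => /andP[/depth_le1_affine [c [Sl lE]] /depth_le1_affine [d [Sr rE]]].
exists (inord 0 \in P, inord 1 \in P, inord 2 \in P),
  (inord 0 \in Sl, inord 1 \in Sl, inord 2 \in Sl), (inord 0 \in Sr, inord 1 \in Sr, inord 2 \in Sr), c, d.
by move=> x; rewrite lE rE !parity3.
Qed.

(* The XOR of h over the cube, i.e. the coefficient of x1 x2 x3 in the GF(2)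
   polynomial of h. *)
Definition xor_cube (h : bool * bool * bool -> bool) : bool :=
  foldr (fun y acc => h y (+) acc) false cube_points.

Lemma xor_cube_ext (h h' : bool * bool * bool -> bool) : h =1 h' -> xor_cube h = xor_cube h'.
Proof. by move=> hh'; rewrite /xor_cube; elim: cube_points => //= y s ->; rewrite hh'. Qed.

(* Functions computed by depth-two trees have GF(2)-degree at most two. *)
Lemma xor_cube_depth2 (p q r : bool * bool * bool) (c d : bool) :
  xor_cube (fun y => if dot3 p y then d (+) dot3 r y else c (+) dot3 q y) = false.
Proof.
by move: p q r => [[[] []] []] [[[] []] []] [[[] []] []]; case: c; case: d.
Qed.

(* Parity decision trees for f have depth at least 3: f has odd weight, so its XOR
   over the cube is 1. *)
Lemma pdt_depth_ge3 (T : pdt 3) : (forall x, pdt_eval T x = f3 x) -> (3 <= pdt_depth T)%N.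
Proof.
move=> Tf3; rewrite leqNgt ltnS; apply/negP => /depth_le2_form [p [q [r [c [d Tform]]]]].
have := xor_cube_depth2 p q r c d.
rewrite (@xor_cube_ext _ f3b) // => y.
by have := Tform (cube y); rewrite bits_cube Tf3 f3_cube => ->.
Qed.

Theorem mainTheorem6 :
  (forall C : numClosedFieldType,
     exact_in_queries C f3 2 /\ (forall t, (t < 2)%N -> ~ exact_in_queries C f3 t))
  /\
  (forall T : pdt 3, (forall x : 'I_3 -> bool, pdt_eval T x = f3 x) ->
     (3 <= pdt_depth T)%N).
Proof.
split; last exact: pdt_depth_ge3.
by move=> C; split; [exact: exact_two_queries | exact: no_exact_below_two].
Qed.
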